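(* Let $\pi_1:V_1\to X_1$ and $\pi_2:V_2\to X_2$ be diffeological vector pseudo-bundles, let $(\tilde f,f)$ be a gluing of the former to the latter such that both $\tilde f$ and $f$ are subductions (onto their images), and let $s_i\in C^\infty(X_i,V_i)$ for $i=1,2$. If $s_1$ and $s_2$ are $(f,\tilde f)$-compatible, then $\mathcal{S}_1(s_1)$ and $s_2$ are $(f_\sim,\tilde f_\sim)$-compatible.
   Context: Diffeological spaces, smooth maps, subset/quotient diffeologies and subductions (smooth surjections with pushforward diffeology on the target) are as usual. A diffeological vector pseudo-bundle $\pi:V\to X$ is a smooth surjection with vector space fibres whose fibrewise addition, scalar multiplication and zero section are smooth. A gluing $(\tilde f,f)$: $f:Y\to X_2$ smooth on $Y\subseteq X_1$, $\tilde f:\pi_1^{-1}(Y)\to V_2$ smooth, $\pi_2\circ\tilde f=f\circ\pi_1$, linear on fibres. $s_1,s_2$ are $(f,\tilde f)$-compatible if $\tilde f(s_1(y))=s_2(f(y))$ for all $y\in Y$ (then $s_1$ is $(f,\tilde f)$-invariant: $\tilde f(s_1(y))=\tilde f(s_1(y'))$ whenever $f(y)=f(y')$). $X_1^f$ is the quotient of $X_1$ identifying $y,y'\in Y$ with $f(y)=f(y')$, $V_1^{\tilde f}$ the quotient of $V_1$ identifying $v,v'\in\pi_1^{-1}(Y)$ with $\tilde f(v)=\tilde f(v')$ (quotient diffeologies, projections $\chi_1^f,\chi_1^{\tilde f}$); $f,\tilde f$ induce $f_\sim:\chi_1^f(Y)\to X_2$ and $\tilde f_\sim:\chi_1^{\tilde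 f}(\pi_1^{-1}(Y))\to V_2$ with $f_\sim\circ\chi_1^f=f$, $\tilde f_\sim\circ\chi_1^{\tilde f}=\tilde f$. For an $(f,\tilde f)$-invariant $s_1$, $\mathcal{S}_1(s_1)$ is the unique smooth section of $V_1^{\tilde f}\to X_1^f$ with $\mathcal{S}_1(s_1)\circ\chi_1^f=\chi_1^{\tilde f}\circ s_1$. A section $\sigma$ of $V_1^{\tilde f}$ and $s_2$ are $(f_\sim,\tilde f_\sim)$-compatible if $\tilde f_\sim(\sigma(z))=s_2(f_\sim(z))$ for all $z\in\chi_1^f(Y)$. *)

From HB Require Import structures.
From mathcomp Require Import all_boot all_order all_algebra.
From mathcomp Require Import all_classical all_reals all_analysis.
Unset Printing Implicit Defensive.
Import Order.TTheory GRing.Theory Num.Theory.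
Import numFieldNormedType.Exports.
Local Open Scope classical_set_scope.
Local Open Scope ring_scope.

Definition elt {T : Type} (A : set T) := {x : T | A x}.

Definition restr {T : Type} {U W : set T} (HWU : W `<=` U) : elt W -> elt U :=
  fun w => exist _ (proj1_sig w) (HWU _ (proj2_sig w)).

Definition pre {V X : Type} (pi : V -> X) (Y : set X) : set V := fun v => Y (pi v).

Definition imset {T U : Type} (g : T -> U) : set U := fun y => exists x, g x = y.
Definition corestr {T U : Type} (g : T -> U) : T -> elt (imset g) :=
  fun x => exist (imset g) (g x) (ex_intro _ x erefl).

Section Diffeology.
Context {R : realType}.

Fixpoint iderive {V W : normedModType R} (vs : seq V) (f : V -> W) : V -> W :=
  match vs with
  | [::] => f
  | v :: vs' => fun x => derive (iderive vs' f) x v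
  end.

Definition smooth_on {V W : normedModType R} (U : set V) (f : V -> W) :=
  forall (vs : seq V) (x : V), U x ->
    (forall v, derivable (iderive vs f) x v) /\ {for x, continuous (iderive vs f)}.

Definition dsmooth {m n : nat} (W : set 'rV[R]_m) (U : set 'rV[R]_n)
  (h : elt W -> elt U) :=
  exists H : 'rV[R]_m -> 'rV[R]_n,
    (forall w, H (proj1_sig w) = proj1_sig (h w)) /\ smooth_on W H.

Definition plots (X : Type) := forall n (U : set 'rV[R]_n), (elt U -> X) -> Prop.

Definition is_diffeology (X : Type) (P : plots X) :=
  [/\ (forall n U p, P n U p -> open U),
      (forall n U (c : X), open U -> P n U (fun _ => c)),
      (forall n U p, open U ->
         (forall u : elt U, exists W (HWU : W `<=` U),
            [/\ open W, W (proj1_sig u) & P n W (p \o restr HWU)]) ->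
         P n U p) &
      (forall n m (U : set 'rV[R]_n) (W : set 'rV[R]_m) p (h : elt W -> elt U),
         P n U p -> open W -> dsmooth W U h -> P m W (p \o h))].

Record dspace := DSpace { dcar :> Type; dplot : plots dcar }.

Definition is_dspace (X : dspace) := is_diffeology X (dplot X).

Definition smooth {X Y : dspace} (g : X -> Y) :=
  forall n U p, dplot X n U p -> dplot Y n U (g \o p).

Definition sub_plots {X : dspace} (A : set X) : plots (elt A) :=
  fun n U p => dplot X n U (@proj1_sig _ _ \o p).
Definition subspace (X : dspace) (A : set X) : dspace := DSpace (elt A) (sub_plots A).

(* quotients: the type of classes of a relation (an equivalence in all uses) *)
Definition quot {T : Type} (r : T -> T -> Prop) := {A : set T | exists x, A = r x}.
Definition qproj {T : Type} (r : T -> T -> Prop) (x : T) : quot r :=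
  exist (fun A => exists y, A = r y) (r x) (ex_intro _ x erefl).
Definition qrep {T : Type} {r : T -> T -> Prop} (z : quot r) : T :=
  projT1 (cid (proj2_sig z)).

Definition quot_plots {X : dspace} (r : X -> X -> Prop) : plots (quot r) :=
  fun n U p => open U /\
    forall u : elt U, exists W (HWU : W `<=` U),
      [/\ open W, W (proj1_sig u) &
        exists q : elt W -> X, dplot X n W q /\
          forall w, qproj r (q w) = p (restr HWU w)].
Definition quotient (X : dspace) (r : X -> X -> Prop) : dspace :=
  DSpace (quot r) (quot_plots r).

Definition subduction {X Y : dspace} (g : X -> Y) :=
  [/\ smooth g, (forall y, exists x, g x = y) &
      (forall n U p, dplot Y n U p -> forall u : elt U,
         exists W (HWU : W `<=` U),
         [/\ open W, W (proj1_sig u) &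
           exists q : elt W -> X, dplot X n W q /\
             forall w, g (q w) = p (restr HWU w)])].

Definition subduction_onto_image {X Y : dspace} (g : X -> Y) :=
  @subduction X (subspace Y (imset g)) (corestr g).

Definition R_plots : plots R := fun n U p =>
  open U /\ exists P : 'rV[R]_n -> R^o,
    (forall u, P (proj1_sig u) = p u) /\ smooth_on U P.

Record pbundle := PBundle {
  tot : dspace; base : dspace; pproj : tot -> base;
  vadd : tot -> tot -> tot; vscale : R -> tot -> tot; vzero : base -> tot }.

Definition is_pbundle (B : pbundle) :=
  let pi := pproj B in let add := vadd B in let sc := vscale B in
  let z := vzero B in
  [/\ is_dspace (tot B), is_dspace (base B),
      smooth pi /\ (forall x, exists v, pi v = x),
      [/\ (forall u v, pi u = pi v -> pi (add u v) = pi u),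
          (forall a u, pi (sc a u) = pi u),
          (forall x, pi (z x) = x),
       [/\ (forall u v, pi u = pi v -> add u v = add v u),
          (forall u v w, pi u = pi v -> pi v = pi w ->
             add (add u v) w = add u (add v w)),
          (forall u, add u (z (pi u)) = u) &
          (forall u, add u (sc (-1) u) = z (pi u))] &
       [/\ (forall a b u, sc a (sc b u) = sc (a * b) u),
          (forall u, sc 1 u = u),
          (forall a u v, pi u = pi v -> sc a (add u v) = add (sc a u) (sc a v)) &
          (forall a b u, sc (a + b) u = add (sc a u) (sc b u))]] &
      [/\ (forall n U p q, dplot (tot B) n U p -> dplot (tot B) n U q ->
             (forall u, pi (p u) = pi (q u)) ->
             dplot (tot B) n U (fun u => add (p u) (q u))),
          (forall n U a p, R_plots n U a -> dplot (tot B) n U p ->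
             dplot (tot B) n U (fun u => sc (a u) (p u))) &
          smooth z]].

Definition smooth_section {B : pbundle} (s : base B -> tot B) :=
  smooth s /\ forall x, pproj B (s x) = x.

Definition is_gluing {B1 B2 : pbundle} {Y : set (base B1)} (f : elt Y -> base B2)
  (ft : elt (pre (pproj B1) Y) -> tot B2) :=
  [/\ @smooth (subspace (base B1) Y) (base B2) f,
      @smooth (subspace (tot B1) (pre (pproj B1) Y)) (tot B2) ft,
      (forall v : elt (pre (pproj B1) Y),
         pproj B2 (ft v) = f (exist Y (pproj B1 (proj1_sig v)) (proj2_sig v))),
      (forall u v w : elt (pre (pproj B1) Y),
         pproj B1 (proj1_sig u) = pproj B1 (proj1_sig v) ->
         proj1_sig w = vadd B1 (proj1_sig u) (proj1_sig v) ->
         ft w = vadd B2 (ft u) (ft v)) &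
      (forall (a : R) (v w : elt (pre (pproj B1) Y)),
         proj1_sig w = vscale B1 a (proj1_sig v) ->
         ft w = vscale B2 a (ft v))].

End Diffeology.

Definition glue_rel {T U : Type} {A : set T} (g : elt A -> U) : T -> T -> Prop :=
  fun x x' => x = x' \/
    exists (hx : A x) (hx' : A x'), g (exist A x hx) = g (exist A x' hx').

Definition qimg {T : Type} (r : T -> T -> Prop) (A : set T) : set (quot r) :=
  fun z => exists y : elt A, qproj r (proj1_sig y) = z.

(* the map induced on the image of A by g : A -> U (g_~ o chi = g) *)
Definition induced {T U : Type} {A : set T} (g : elt A -> U) :
  elt (qimg (glue_rel g) A) -> U :=
  fun z => g (projT1 (cid (proj2_sig z))).

(* S(s): the section of the quotient induced by an invariant section s,
   characterised by S(s) o chi = chi~ o s *)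
Definition induced_section {T1 T2 : Type} (r1 : T1 -> T1 -> Prop)
  (r2 : T2 -> T2 -> Prop) (s : T1 -> T2) : quot r1 -> quot r2 :=
  fun z => qproj r2 (s (qrep z)).

Definition compatible {X1 V1 X2 V2 : Type} {A : set X1} {D : set V1}
  (g : elt A -> X2) (gt : elt D -> V2) (s1 : X1 -> V1) (s2 : X2 -> V2) :=
  forall y : elt A, exists v : elt D,
    proj1_sig v = s1 (proj1_sig y) /\ gt v = s2 (g y).

From mathcomp Require Import all_boot all_algebra all_classical all_reals.

(* For [z = chi(y)] with
   [y] in [Y], [S1(s1) z = chi~(s1 y)], hence
   [ft_~ (S1(s1) z) = ft (s1 y) = s2 (f y) = s2 (f_~ z)]; the only work is
   checking that [f_~] and [ft_~] do not depend on the representative. *)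

Lemma qprojK {T : Type} (r : T -> T -> Prop) (z : quot r) : qproj r (qrep z) = z.
Proof.
case: z => A hA; rewrite /qrep /qproj /=.
by case: (cid hA) => x /= Ax; exact: eq_exist.
Qed.

Section GlueRel.
Context {T U : Type} {A : set T} (g : elt A -> U).

Lemma qproj_glue_rel (x x' : T) :
  qproj (glue_rel g) x = qproj (glue_rel g) x' -> glue_rel g x x'.
Proof. by move=> /(congr1 (@proj1_sig _ _)) /= ->; left. Qed.

Lemma glue_rel_elt (a : elt A) (x : T) :
  glue_rel g (proj1_sig a) x -> exists hx : A x, g (exist A x hx) = g a.
Proof.
case: a => a ha /= [<-|[ha' [hx e]]]; first by exists ha.
by exists hx; rewrite -e; congr g; exact: eq_exist.
Qed.

Lemma induced_qproj (a : elt A) (z : elt (qimg (glue_rel g) A)) :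
  proj1_sig z = qproj (glue_rel g) (proj1_sig a) -> induced g z = g a.
Proof.
move=> za; rewrite /induced; case: (cid _) => b /=.
rewrite za => /qproj_glue_rel /glue_rel_elt [hb <-].
by case: a za hb => a ha _ hb; congr g; exact: eq_exist.
Qed.

End GlueRel.

Lemma compatible_induced {X1 V1 X2 V2 : Type} {A : set X1} {D : set V1}
  (g : elt A -> X2) (gt : elt D -> V2) (s1 : X1 -> V1) (s2 : X2 -> V2) :
  compatible g gt s1 s2 ->
  compatible (induced g) (induced gt)
    (induced_section (glue_rel g) (glue_rel gt) s1) s2.
Proof.
move=> hc z.
set x := qrep (proj1_sig z).
have zx : proj1_sig z = qproj (glue_rel g) x by rewrite qprojK.
have [y yz] := proj2_sig z.
have [hx _] : exists hx : A x, g (exist A x hx) = g y.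
  by apply: glue_rel_elt; apply: qproj_glue_rel; rewrite yz zx.
have [v [vx gtv]] := hc (exist A x hx).
pose w : elt (qimg (glue_rel gt) D) :=
  exist _ (qproj (glue_rel gt) (proj1_sig v)) (ex_intro _ v erefl).
exists w.
split; first by rewrite /induced_section /= vx.
by rewrite (induced_qproj gt v w erefl) gtv
  (induced_qproj g (exist A x hx) z zx).
Qed.

Theorem proposition2p26 (R : realType) (B1 B2 : @pbundle R)
  (Y : set (base B1)) (f : elt Y -> base B2)
  (ft : elt (pre (pproj B1) Y) -> tot B2)
  (s1 : base B1 -> tot B1) (s2 : base B2 -> tot B2) :
  is_pbundle B1 -> is_pbundle B2 ->
  is_gluing f ft ->
  @subduction_onto_image R (subspace (base B1) Y) (base B2) f ->
  @subduction_onto_image R (subspace (tot B1) (pre (pproj B1) Y)) (tot B2) ft ->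
  smooth_section s1 -> smooth_section s2 ->
  compatible f ft s1 s2 ->
  compatible (induced f) (induced ft)
    (induced_section (glue_rel f) (glue_rel ft) s1) s2.
Proof. by move=> _ _ _ _ _ _ _; exact: compatible_induced. Qed.
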